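(* Let $K$ be a commutative ring of characteristic $0$ with unit and $M$ a multiplicative $\mathbb{R}$-vector subspace of $\mathcal{H}^{>0}$. Let $F=G(m_0,\dots,m_k)$ be an $M$-generalized power series over $K$ with generating monomials $m_0,\dots,m_k$, and assume that the $m_i$ are pairwise comparable. Then $F$ has $\langle m_0,\dots,m_k\rangle^\times$-natural support, i.e. for every $p\in\langle m_0,\dots,m_k\rangle^\times$ the set $\operatorname{supp}(F)\cap(p,+\infty)$ is finite.
   Context: $\mathcal{H}$ is the Hardy field of germs at $+\infty$ of unary functions definable in $\mathbb{R}_{\mathrm{an},\exp}$, totally ordered by eventual comparison. $\langle m_0,\dots,m_k\rangle^\times$ is the multiplicative $\mathbb{R}$-vector space generated by $m_0,\dots,m_k$, i.e. $\{m_0^{r_0}\cdots m_k^{r_k}:r_i\in\mathbb{R}\}$. Germs $f,g$ are comparable if there are $r,s>0$ with $|f|^r<|g|<|f|^s$ eventually. An $M$-generalized power series over $K$ with generating monomials $m_0,\dots,m_k$ is a series $G(m_0,\dots,m_k)=\sum_{n\in M}\big(\sum_{\alpha\in\operatorname{supp}G,\,m^\alpha=n}a_\alpha\big)n$ in the ring $K((M))$ of formal series with anti-well-ordered support, where $m_0,\dots,m_k\in M$ are small (tend to $0$) and $G=\sum_\alpha a_\alpha X^\alpha$ is a generalized power series over $K$ in $X_0,\dots,X_k$ (support in a product of well-ordered subsets of $[0,\infty)$) with natural support (for each $a>0$ and each $i$, $[0,a)\cap\Pi_i(\operatorname{supp}G)$ is finite). $\operatorname{supp}(F)$ is the set of $n\in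 M$ with nonzero coefficient. *)

From HB Require Import structures.
From mathcomp Require Import all_boot all_order all_algebra.
From mathcomp Require Import boolp classical_sets functions cardinality fsbigop.
From mathcomp Require Import reals sequences exp.
Set Implicit Arguments. Unset Strict Implicit. Unset Printing Implicit Defensive.
Import Order.TTheory GRing.Theory Num.Theory.
Local Open Scope classical_set_scope.
Local Open Scope ring_scope.

(* Germs at +oo of real functions, represented by functions R -> R.    *)
Definition eventually (R : realType) (P : R -> Prop) : Prop :=
  exists a : R, forall x, a < x -> P x.
Definition germ_eq (R : realType) (f g : R -> R) : Prop :=
  eventually (fun x => f x = g x).
Definition germ_lt (R : realType) (f g : R -> R) : Prop :=
  eventually (fun x => f x < g x).

Definition ps_term (R : realType) (n : nat) (c : ('I_n -> nat) -> R)
  (x y : 'I_n -> R) (b : 'I_n -> nat) : R :=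
  c b * \prod_(i < n) (y i - x i) ^+ b i.

Definition box_psum (R : realType) (n : nat) (c : ('I_n -> nat) -> R)
  (x y : 'I_n -> R) (N : nat) : R :=
  \sum_(b : {ffun 'I_n -> 'I_N}) ps_term c x y (fun i => nat_of_ord (b i)).
Definition box_abssum (R : realType) (n : nat) (c : ('I_n -> nat) -> R)
  (x y : 'I_n -> R) (N : nat) : R :=
  \sum_(b : {ffun 'I_n -> 'I_N}) `|ps_term c x y (fun i => nat_of_ord (b i))|.

Definition analytic_at (R : realType) (n : nat) (g : ('I_n -> R) -> R)
  (x : 'I_n -> R) : Prop :=
  exists (c : ('I_n -> nat) -> R) (r : R), 0 < r /\
    forall y : 'I_n -> R, (forall i, `|y i - x i| < r) ->
      (exists B : R, forall N, box_abssum c x y N <= B) /\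
      (forall e : R, 0 < e -> exists N0 : nat, forall N : nat,
          (N0 <= N)%N -> `|box_psum c x y N - g y| < e).

Definition restricted_analytic (R : realType) (n : nat)
  (f : ('I_n -> R) -> R) : Prop :=
  exists (g : ('I_n -> R) -> R) (eps : R), 0 < eps /\
    (forall x : 'I_n -> R, (forall i, `|x i| < 1 + eps) -> analytic_at g x) /\
    (forall x : 'I_n -> R, f x = if [forall i, `|x i| <= 1] then g x else 0).

Record ranfun (R : realType) (n : nat) := RanFun {
  ranfun_val :> ('I_n -> R) -> R;
  ranfun_prop : restricted_analytic ranfun_val }.

(* First-order language of R_an,exp (with real constants = parameters) *)
Inductive term (R : realType) : Type :=
  | TVar of nat
  | TConst of R
  | TAdd of term R & term R
  | TMul of term R & term R
  | TOpp of term R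
  | TExp of term R
  | TRan (n : nat) (f : ranfun R n) (args : 'I_n -> term R).

Fixpoint teval (R : realType) (e : nat -> R) (t : term R) : R :=
  match t with
  | TVar i => e i
  | TConst c => c
  | TAdd t1 t2 => teval e t1 + teval e t2
  | TMul t1 t2 => teval e t1 * teval e t2
  | TOpp t1 => - teval e t1
  | TExp t1 => expR (teval e t1)
  | TRan n f args => f (fun i => teval e (args i))
  end.

Inductive formula (R : realType) : Type :=
  | FEq of term R & term R
  | FLt of term R & term R
  | FNot of formula R
  | FAnd of formula R & formula R
  | FEx of nat & formula R.

Fixpoint fsat (R : realType) (e : nat -> R) (phi : formula R) : Prop :=
  match phi with
  | FEq t u => teval e t = teval e u
  | FLt t u => teval e t < teval e u
  | FNot p => ~ fsat e p
  | FAnd p q => fsat e p /\ fsat e q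
  | FEx i p => exists r : R, fsat (fun j => if j == i then r else e j) p
  end.

(* f's germ at +oo lies in H: f restricted to some (a,+oo) is definable
   (with parameters) in R_an,exp; variable 0 = x, variable 1 = y.      *)
Definition in_H (R : realType) (f : R -> R) : Prop :=
  exists (phi : formula R) (a : R), forall x y : R, a < x ->
    (fsat (fun j => if j == 0%N then x else if j == 1%N then y else 0) phi
     <-> y = f x).

(* M : a multiplicative R-vector subspace of H^{>0}, as a germ-closed  *)
(* set of representatives.                                             *)
Definition mult_subspace (R : realType) (M : set (R -> R)) : Prop :=
  (forall f, M f -> in_H f /\ eventually (fun x => 0 < f x)) /\
  (forall f g, M f -> germ_eq f g -> M g) /\
  M (fun _ => 1) /\
  (forall f g, M f -> M g -> M (fun x => f x * g x)) /\
  (forall f (r : R), M f -> M (fun x => f x `^ r)).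

Definition small (R : realType) (f : R -> R) : Prop :=
  forall e : R, 0 < e -> eventually (fun x => `|f x| < e).

Definition germ_comparable (R : realType) (f g : R -> R) : Prop :=
  exists r s : R, 0 < r /\ 0 < s /\
    eventually (fun x => `|f x| `^ r < `|g x| /\ `|g x| < `|f x| `^ s).

Definition char0 (K : comNzRingType) : Prop :=
  forall n : nat, (n%:R : K) = 0 -> n = 0%N.

Definition mono (R : realType) (k : nat) (m : 'I_k.+1 -> R -> R)
  (al : 'I_k.+1 -> R) : R -> R :=
  fun x => \prod_(i < k.+1) (m i x `^ al i).

(* Generalized power series G = sum_alpha a_alpha X^alpha over K.      *)
Definition gsupp (R : realType) (K : comNzRingType) (k : nat)
  (a : {ffun 'I_k.+1 -> R} -> K) : set {ffun 'I_k.+1 -> R} :=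
  [set al | a al != 0].

Definition well_ordered (R : realType) (A : set R) : Prop :=
  forall B : set R, B `<=` A -> B !=set0 -> exists2 x, B x & forall y, B y -> x <= y.

Definition is_gps (R : realType) (K : comNzRingType) (k : nat)
  (a : {ffun 'I_k.+1 -> R} -> K) : Prop :=
  (exists S : 'I_k.+1 -> set R,
      (forall i, S i `<=` [set x | 0 <= x] /\ well_ordered (S i)) /\
      gsupp a `<=` [set al | forall i, S i (al i)]) /\
  (forall b : R, 0 < b -> forall i : 'I_k.+1,
      finite_set ([set al i | al in gsupp a] `&` [set x | 0 <= x < b])).

(* coefficient of the monomial (germ) n in F = G(m_0,...,m_k):
   sum of a_alpha over alpha in supp G with m^alpha = n (as germs).
   (fsbig convention: 0 if this fibre were infinite.) *)
Definition gcoef (R : realType) (K : comNzRingType) (k : nat)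
  (m : 'I_k.+1 -> R -> R) (a : {ffun 'I_k.+1 -> R} -> K) (n : R -> R) : K :=
  \sum_(al \in [set al | a al != 0 /\ germ_eq (mono m al) n]) a al.

Definition Fsupp (R : realType) (K : comNzRingType) (M : set (R -> R))
  (k : nat) (m : 'I_k.+1 -> R -> R) (a : {ffun 'I_k.+1 -> R} -> K) : set (R -> R) :=
  [set n | M n /\ gcoef m a n != 0].

From Pilot Require Import Defs.
From HB Require Import structures.
From mathcomp Require Import all_boot all_order all_algebra.
From mathcomp Require Import boolp classical_sets functions cardinality fsbigop.
From mathcomp Require Import reals sequences exp.
Import Order.TTheory GRing.Theory Num.Theory.
Local Open Scope classical_set_scope.
Local Open Scope ring_scope.

(* Every n in supp F is m^alpha for some alpha in supp G.  Writing
   m_i = exp(-l_i) with l_i -> +oo, comparability makes every l_i of the order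
   of l_0, so m^r < m^alpha forces sum alpha_i l_i < sum r_i l_i and hence bounds
   each alpha_j.  By natural support only finitely many values alpha_j occur
   below such a bound, so only finitely many alpha, hence finitely many n. *)

Lemma weighted_sum_lt_bound {R : realDomainType} {n : nat}
    {al r c C l : 'I_n -> R} {u : R} :
  0 < u -> (forall i, 0 <= c i) -> (forall i, c i * u <= l i <= C i * u) ->
  (forall i, 0 <= al i) -> \sum_i al i * l i < \sum_i r i * l i ->
  forall j, al j * c j < \sum_i `|r i| * C i.
Proof.
move=> u0 c0 hl al0 lt_sum j.
have l0 i : 0 <= l i.
  by have /andP[+ _] := hl i; apply: le_trans; rewrite mulr_ge0 // ltW.
rewrite -(ltr_pM2r u0) -mulrA mulr_suml.
apply: le_lt_trans (_ : _ <= \sum_i al i * l i) _.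
  apply: le_trans (_ : al j * l j <= _).
    by rewrite ler_wpM2l //; have /andP[] := hl j.
  by rewrite (bigD1 j) //= lerDl sumr_ge0 // => i _; rewrite mulr_ge0.
apply: (lt_le_trans lt_sum); apply: ler_sum => i _.
apply: le_trans (_ : `|r i| * l i <= _); first by rewrite ler_wpM2r // ler_norm.
by rewrite -mulrA ler_wpM2l //; have /andP[] := hl i.
Qed.

Section Germs.
Context {R : realType}.

Lemma eventually_and {P Q : R -> Prop} :
  Defs.eventually P -> Defs.eventually Q -> Defs.eventually (fun x => P x /\ Q x).
Proof.
move=> [a ha] [b hb]; exists (Num.max a b) => x; rewrite gt_max => /andP[xa xb].
by split; [exact: ha | exact: hb].
Qed.

Lemma eventually_forall {I : finType} {P : I -> R -> Prop} :
  (forall i, Defs.eventually (P i)) -> Defs.eventually (fun x => forall i, P i x).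
Proof.
move=> /choice[a ha]; exists (\sum_i `|a i|) => x hx i; apply: ha.
apply: le_lt_trans hx; rewrite (bigD1 i) //=; apply: le_trans (ler_norm (a i)) _.
by rewrite lerDl sumr_ge0.
Qed.

Lemma eventually_ex {P : R -> Prop} : Defs.eventually P -> exists x, P x.
Proof. by move=> [a ha]; exists (a + 1); apply: ha; rewrite ltrDl. Qed.

Lemma germ_eq_sym {f g : R -> R} : germ_eq f g -> germ_eq g f.
Proof. by move=> [a ha]; exists a => x /ha ->. Qed.

Lemma germ_lt_congr {f f' g g' : R -> R} :
  germ_eq f f' -> germ_eq g g' -> germ_lt f g -> germ_lt f' g'.
Proof.
move=> hf hg hfg; have [a ha] := eventually_and (eventually_and hf hg) hfg.
by exists a => x /ha[[<- <-]].
Qed.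

Definition ln_comparable (f g : R -> R) : Prop :=
  exists c C : R, 0 < c /\ 0 < C /\
    Defs.eventually (fun x => c * - ln (f x) <= - ln (g x) <= C * - ln (f x)).

Lemma ln_comparable_refl (f : R -> R) : ln_comparable f f.
Proof. by exists 1, 1; do 2!split=> //; exists 0 => x _; rewrite mul1r lexx. Qed.

Lemma germ_comparable_ln {f g : R -> R} :
  Defs.eventually (fun x => 0 < f x) -> Defs.eventually (fun x => 0 < g x) ->
  germ_comparable f g -> ln_comparable f g.
Proof.
move=> fpos gpos [r [s [r0 [s0 hfg]]]]; exists s, r; do 2!split=> //.
have [a ha] := eventually_and (eventually_and fpos gpos) hfg.
exists a => x /ha[[fx gx]]; rewrite !gtr0_norm // => -[lt_fg lt_gf].
rewrite !mulrN !lerN2 -!ln_powR; apply/andP; split; apply/ltW;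
  by rewrite ltr_ln // posrE powR_gt0.
Qed.

Lemma mono_expR {k : nat} (m : 'I_k.+1 -> R -> R)
    (al : 'I_k.+1 -> R) (x : R) :
  (forall i, 0 < m i x) -> mono m al x = expR (\sum_i al i * ln (m i x)).
Proof.
by move=> mx; rewrite /mono expR_sum; apply: eq_bigr => i _; rewrite /powR gt_eqF.
Qed.

End Germs.

Section ExponentBound.
Context {R : realType} {k : nat} {m : 'I_k.+1 -> R -> R}.
Hypothesis m_unit : forall i, Defs.eventually (fun x => 0 < m i x < 1).
Hypothesis m_ln_comparable : forall i, ln_comparable (m ord0) (m i).

Lemma mono_lt_exponent_bound (r : 'I_k.+1 -> R) :
  exists B : 'I_k.+1 -> R, (forall j, 0 < B j) /\
    forall al : 'I_k.+1 -> R, (forall j, 0 <= al j) ->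
      germ_lt (mono m r) (mono m al) -> forall j, al j < B j.
Proof.
have /choice[c /choice[C hcC]] := m_ln_comparable.
pose D := \sum_i `|r i| * C i.
have c0 j : 0 < c j by have [] := hcC j.
have C0 j : 0 < C j by have [_ []] := hcC j.
have D0 : 0 <= D by rewrite sumr_ge0 // => i _; rewrite mulr_ge0 // ltW.
exists (fun j => D / c j + 1); split=> [j|al al0 lt_mono j].
  by rewrite ltr_wpDl // divr_ge0 // ltW.
have bounds i : Defs.eventually (fun x => 0 < m i x < 1 /\
    c i * - ln (m ord0 x) <= - ln (m i x) <= C i * - ln (m ord0 x)).
  by apply: eventually_and; [exact: m_unit | have [_ [_]] := hcC i].
have [x [hx lt_x]] :=
  eventually_ex (eventually_and (eventually_forall bounds) lt_mono).
have mx i : 0 < m i x by have [/andP[]] := hx i.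
have u0 : 0 < - ln (m ord0 x).
  by rewrite oppr_gt0; apply: ln_lt0; have [] := hx ord0.
have lt_sum : \sum_i al i * - ln (m i x) < \sum_i r i * - ln (m i x).
  rewrite !mono_expR // ltr_expR in lt_x.
  by under eq_bigr do rewrite mulrN; under [X in _ < X]eq_bigr do rewrite mulrN;
    rewrite !sumrN ltrN2.
have := weighted_sum_lt_bound u0 (fun i => ltW (c0 i)) (fun i => (hx i).2) al0
  lt_sum j.
by rewrite -ltr_pdivlMr // => /lt_le_trans; apply; rewrite lerDl.
Qed.

End ExponentBound.

Section Supports.
Context {R : realType} {K : comNzRingType} {k : nat} {a : {ffun 'I_k.+1 -> R} -> K}.

Lemma gcoef_neq0_mono (m : 'I_k.+1 -> R -> R) (n : R -> R) :
  gcoef m a n != 0 -> exists al, a al != 0 /\ germ_eq (mono m al) n.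
Proof.
apply: contra_neqP => no_al; rewrite /gcoef.
suff -> : [set al | a al != 0 /\ germ_eq (mono m al) n] = set0 by rewrite fsbig_set0.
by apply/seteqP; split=> // al al_n; apply: no_al; exists al.
Qed.

Hypothesis a_gps : is_gps a.

Lemma gps_supp_ge0 {al : {ffun 'I_k.+1 -> R}} : gsupp a al -> forall j, 0 <= al j.
Proof. by have [[S [S_ge0 a_S]] _] := a_gps => /a_S al_S j; apply: (S_ge0 j).1. Qed.

Lemma gps_bounded_exponents_in_seq {B : 'I_k.+1 -> R} : (forall j, 0 < B j) ->
  exists S : seq R, forall al, gsupp a al -> (forall j, al j < B j) ->
    forall j, al j \in S.
Proof.
move=> B0; have /choice[s hs] : forall j, exists s : seq R,
    [set al j | al in gsupp a] `&` [set x | 0 <= x < B j] = [set` s].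
  by move=> j; apply/finite_seqP; exact: a_gps.2.
exists (flatten [seq s j | j <- enum 'I_k.+1]) => al al_a al_B j.
apply/flattenP; exists (s j); first by rewrite map_f ?mem_enum.
suff : [set` s j] (al j) by [].
by rewrite -hs; split; [exists al | rewrite /= gps_supp_ge0 ?al_B].
Qed.

End Supports.

Lemma ffun_in_seq_enum {I : finType} {T : eqType} (x0 : T) (S : seq T) :
  exists N (v : 'I_N -> {ffun I -> T}),
    forall f : {ffun I -> T}, (forall i, f i \in S) -> exists j, f = v j.
Proof.
exists #|{ffun I -> 'I_(size S).+1}|.
exists (fun j => [ffun i => nth x0 S ((enum_val j : {ffun I -> 'I_(size S).+1}) i)]).
move=> f f_S.
exists (enum_rank [ffun i => inord (index (f i) S) : 'I_(size S).+1]).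
apply/ffunP => i; rewrite enum_rankK !ffunE inordK ?nth_index //.
by rewrite ltnS index_size.
Qed.

Theorem lemma5p4 (R : realType) (K : comNzRingType) (hK : char0 K)
  (M : set (R -> R)) (hM : mult_subspace M)
  (k : nat) (m : 'I_k.+1 -> R -> R)
  (hmM : forall i, M (m i)) (hms : forall i, small (m i))
  (a : {ffun 'I_k.+1 -> R} -> K) (ha : is_gps a)
  (hcomp : forall i j : 'I_k.+1, i != j -> germ_comparable (m i) (m j)) :
  forall p : R -> R,
    (exists r : 'I_k.+1 -> R, germ_eq p (mono m r)) ->
    exists (N : nat) (q : 'I_N -> R -> R),
      forall n : R -> R, Fsupp M m a n -> germ_lt p n ->
        exists i : 'I_N, germ_eq n (q i).
Proof.
move=> p [r p_r].
have m_pos i : Defs.eventually (fun x => 0 < m i x) := (hM.1 _ (hmM i)).2.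
have m_unit i : Defs.eventually (fun x => 0 < m i x < 1).
  have [b hb] := eventually_and (m_pos i) (hms i 1 ltr01).
  by exists b => x /hb[mx0 mx1]; rewrite mx0 (le_lt_trans (ler_norm _) mx1).
have m_ln i : ln_comparable (m ord0) (m i).
  have [->|i0] := eqVneq i ord0; first exact: ln_comparable_refl.
  by apply: germ_comparable_ln => //; apply: hcomp; rewrite eq_sym.
have [B [B0 hB]] := mono_lt_exponent_bound m_unit m_ln r.
have [S hS] := gps_bounded_exponents_in_seq ha B0.
have [N [v hv]] := ffun_in_seq_enum (I := 'I_k.+1) (T := R) 0 S.
exists N, (fun i => mono m (v i)) => n [_ /gcoef_neq0_mono[al [al_a al_n]]] p_n.
have r_al : germ_lt (mono m r) (mono m al).
  exact: germ_lt_congr p_r (germ_eq_sym al_n) p_n.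
have [i al_v] := hv al (hS al al_a (hB al (gps_supp_ge0 ha al_a) r_al)).
by exists i; rewrite -al_v; apply: germ_eq_sym.
Qed.
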